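(* Consider a combinatorial auction as described in the context, let $x^*$ be an efficient allocation, and let $\bar\rho=(\bar\rho_i)_{i\in\mathcal I}$ be any payment vector that is core-selecting at $x^*$. Then there exists an Artificial Walrasian Equilibrium (obtained by adding valid cuts as artificial items) supporting $x^*$ in which every winning bidder $i$ pays in total exactly $\bar\rho_i$, i.e. $p\,a^{i*}=\bar\rho_i$ where $p$ is the price vector on original and artificial items and $a^{i*}$ is bidder $i$'s allocated bundle in the augmented auction.
   Context: Combinatorial auction (CA): item types $j\in\mathcal J=\{1,\dots,J\}$ with supply $c_j\in\mathbb Z_{\ge1}$ (supply vector $c$); bidders $\mathcal I=\{1,\dots,I\}$; a finite set of bids $\mathcal K=\{1,\dots,K\}$, each bid $k$ made by a bidder $i(k)$ and consisting of a bundle $a^k\in\mathbb Z^J_{\ge0}$ with $a^k\le c$ and an amount $b_k\ge0$; $\mathcal K_i$ is the set of bids of bidder $i$. Bids are taken to be truthful. $\bm A$ is the $J\times K$ matrix with columns $a^k$, and $\bm B$ is the $I\times K$ matrix with $\bm B_{i,k}=1$ iff $k\in\mathcal K_i$, else $0$. A feasible allocation is $x\in\{0,1\}^K$ with $\bm Ax\le c$ and $\bm Bx\le\bm 1$ (at most one bid accepted per bidder). For a set of bidders $\mathcal C$, a supply vector $c'$ and bid amounts, $w(\mathcal C,c',\cdot)$ is the maximum of $\sum_k b_kx_k$ over feasible allocations (with supply $c'$) using only bids of bidders in $\mathcal C$. An efficient allocation $x^*$ is an optimal feasible allocation for all bidders and supply $c$; $a^{i*}$ and $b_{i*}$ denote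 the bundle and amount of bidder $i$'s accepted bid ($\bm 0$ and $0$ if none). A payment vector $\rho$ (with $\rho_i=0$ for bidders with no accepted bid) is core-selecting at $x^*$ if $\rho_i\le b_{i*}$ for all $i$ and for every $\mathcal C\subseteq\mathcal I$: $\sum_{i\in\mathcal C}(b_{i*}-\rho_i)+\sum_{i\in\mathcal I}\rho_i\ge w(\mathcal C,c,\mathcal K^{\mathcal C})$, where $\mathcal K^{\mathcal C}$ is the set of bids of bidders in $\mathcal C$. A Walrasian equilibrium (WE) is a pair $(x^*,p)$, $x^*$ efficient, $p\in\mathbb R^J_{\ge0}$, such that the surpluses $s_i=b_{i*}-p\,a^{i*}$ satisfy $s_i\ge0$ for all $i$, $p\,a^k+s_{i(k)}\ge b_k$ for all bids $k$ (envy-freeness), and $p_j=0$ whenever $(\bm Ax^* )_j<c_j$; payments are $\rho_i=p\,a^{i*}$. A valid cut is a pair $(\alpha,\alpha_0)$ with $\alpha\in\mathbb R^K_{\ge0}$ such that $\alpha x\le\alpha_0$ for every feasible allocation $x$ and $\alpha x^*=\alpha_0$ (fully demanded at $x^*$). Adding it as an artificial item means appending $\alpha$ as a new row of $\bm A$ (bid $k$ contains $\alpha_k$ units of the new item) with supply $\alpha_0$; this leaves the set of feasible allocations unchanged. An Artificial Walrasian Equilibrium (AWE) is a WE of the CA augmented by finitely many valid cuts as artificial items. *)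

From mathcomp Require Import all_boot all_order all_algebra.
Set Implicit Arguments. Unset Strict Implicit. Unset Printing Implicit Defensive.
Import Order.TTheory GRing.Theory Num.Theory.
Local Open Scope ring_scope.

Section CA.
Variables (R : realFieldType) (J I K : nat).
(* supply c, bundles a (a k j = units of item j in bid k), amounts b, bidder of each bid *)
Variables (c : 'I_J -> nat) (a : 'I_K -> 'I_J -> nat) (b : 'I_K -> R)
          (bidder : 'I_K -> 'I_I).

(* An allocation x in {0,1}^K is represented by the set of accepted bids. *)
Definition feasible (x : {set 'I_K}) : bool :=
  [forall j, (\sum_(k in x) a k j <= c j)%N] &&
  [forall i, (#|[set k in x | bidder k == i]| <= 1)%N].

Definition welfare (x : {set 'I_K}) : R := \sum_(k in x) b k.

Definition coal_value (C : {set 'I_I}) : R :=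
  \big[Num.max/0]_(x : {set 'I_K} | feasible x && [forall k in x, bidder k \in C])
     welfare x.

Definition efficient (x : {set 'I_K}) : Prop :=
  feasible x /\ forall y, feasible y -> welfare y <= welfare x.

Definition win_amount (x : {set 'I_K}) (i : 'I_I) : R :=
  \sum_(k in x | bidder k == i) b k.

Definition is_winner (x : {set 'I_K}) (i : 'I_I) : Prop :=
  exists2 k, k \in x & bidder k = i.

Definition core_selecting (x : {set 'I_K}) (rho : 'I_I -> R) : Prop :=
  (forall i, ~ is_winner x i -> rho i = 0) /\
  (forall i, rho i <= win_amount x i) /\
  (forall C : {set 'I_I},
     \sum_(i in C) (win_amount x i - rho i) + \sum_i rho i >= coal_value C).

(* A cut (alpha, alpha0): alpha k = units of the artificial item in bid k. *)
Definition valid_cut (x : {set 'I_K}) (cut : ('I_K -> R) * R) : Prop :=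
  (forall k, 0 <= cut.1 k) /\
  (forall y, feasible y -> \sum_(k in y) cut.1 k <= cut.2) /\
  \sum_(k in x) cut.1 k = cut.2.

Section Augmented.
Variables (m : nat) (cuts : 'I_m -> ('I_K -> R) * R).

Definition feasible_aug (x : {set 'I_K}) : Prop :=
  feasible x /\ forall l, \sum_(k in x) (cuts l).1 k <= (cuts l).2.

Definition efficient_aug (x : {set 'I_K}) : Prop :=
  feasible_aug x /\ forall y, feasible_aug y -> welfare y <= welfare x.

Definition bid_price (p : 'I_J -> R) (q : 'I_m -> R) (k : 'I_K) : R :=
  \sum_j p j * (a k j)%:R + \sum_l q l * (cuts l).1 k.

Definition payment (x : {set 'I_K}) (p : 'I_J -> R) (q : 'I_m -> R) (i : 'I_I) : R :=
  \sum_(k in x | bidder k == i) bid_price p q k.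

Definition surplus (x : {set 'I_K}) (p : 'I_J -> R) (q : 'I_m -> R) (i : 'I_I) : R :=
  win_amount x i - payment x p q i.

Definition walrasian_eq (x : {set 'I_K}) (p : 'I_J -> R) (q : 'I_m -> R) : Prop :=
  efficient_aug x /\
  (forall j, 0 <= p j) /\ (forall l, 0 <= q l) /\
  (forall i, 0 <= surplus x p q i) /\
  (forall k, bid_price p q k + surplus x p q (bidder k) >= b k) /\
  (forall j, (\sum_(k in x) a k j < c j)%N -> p j = 0) /\
  (forall l, \sum_(k in x) (cuts l).1 k < (cuts l).2 -> q l = 0).
End Augmented.

End CA.

From mathcomp Require Import all_boot all_order all_algebra.
Set Implicit Arguments. Unset Strict Implicit. Unset Printing Implicit Defensive.
Import Order.TTheory GRing.Theory Num.Theory.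
Local Open Scope ring_scope.

(* A single artificial item suffices.  Let s_i = b_{i*} - rho_i be the surplus
   the core payments leave to bidder i, and let bid k contain
   alpha_k = max(0, b_k - s_{i(k)}) units of the artificial item, whose supply is
   sum_i rho_i; price the artificial item at 1 and every original item at 0.
   Envy-freeness then holds by the choice of alpha, the winning bids pay exactly
   rho, and the cut is valid because for a feasible allocation y the core
   constraint of the coalition of bidders served by y gives
   sum_{k in y} (b_k - s_{i(k)}) <= sum_i rho_i. *)

Section Allocations.
Variables (R : realFieldType) (J I K : nat).
Variables (c : 'I_J -> nat) (a : 'I_K -> 'I_J -> nat) (b : 'I_K -> R)
          (bidder : 'I_K -> 'I_I).

Lemma feasible_subset (y z : {set 'I_K}) :
  feasible c a bidder y -> z \subset y -> feasible c a bidder z.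
Proof.
move=> /andP[/forallP supply /forallP single] zy; apply/andP; split.
  apply/forallP=> j; apply: leq_trans (supply j).
  by rewrite [leqRHS](big_setID z) /= (setIidPr zy) leq_addr.
apply/forallP=> i; apply: leq_trans (single i); apply: subset_leq_card.
by apply/subsetP=> k; rewrite !inE => /andP[/(subsetP zy) -> ->].
Qed.

Lemma feasible_bidder_inj (y : {set 'I_K}) :
  feasible c a bidder y -> {in y &, injective bidder}.
Proof.
move=> /andP[_ /forallP single] k1 k2 k1y k2y same.
by apply: (card_le1_eqP (single (bidder k1))); rewrite inE ?k1y ?k2y ?same eqxx.
Qed.

Lemma sum_bids_of_bidder (y : {set 'I_K}) k (F : 'I_K -> R) :
  feasible c a bidder y -> k \in y ->
  \sum_(k' in y | bidder k' == bidder k) F k' = F k.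
Proof.
move=> fy ky; rewrite (bigD1 k) ?ky ?eqxx //= big1 ?addr0 //.
move=> k' /andP[/andP[k'y /eqP same] k'k].
by rewrite (feasible_bidder_inj fy k'y ky same) eqxx in k'k.
Qed.

Lemma winnerP (y : {set 'I_K}) i :
  reflect (is_winner bidder y i) [exists k in y, bidder k == i].
Proof.
apply: (iffP exists_inP) => [[k ky /eqP ki] | [k ky ki]]; exists k => //.
exact/eqP.
Qed.

Lemma sum_bids_of_loser (y : {set 'I_K}) i (F : 'I_K -> R) :
  ~ is_winner bidder y i -> \sum_(k in y | bidder k == i) F k = 0.
Proof. by move=> loser; rewrite big1 // => k /andP[ky /eqP ki]; case: loser; exists k. Qed.

Lemma welfare_le_coal_value (y : {set 'I_K}) (C : {set 'I_I}) :
  feasible c a bidder y -> {in y, forall k, bidder k \in C} ->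
  welfare b y <= coal_value c a b bidder C.
Proof.
move=> fy yC; apply: le_bigmax_cond; rewrite fy.
by apply/forall_inP => k /yC.
Qed.

End Allocations.
Arguments winnerP {I K} bidder y i.

Section CoreCut.
Variables (R : realFieldType) (J I K : nat).
Variables (c : 'I_J -> nat) (a : 'I_K -> 'I_J -> nat) (b : 'I_K -> R)
          (bidder : 'I_K -> 'I_I).
Variables (xs : {set 'I_K}) (rho : 'I_I -> R).
Hypothesis xs_efficient : efficient c a b bidder xs.
Hypothesis rho_core : core_selecting c a b bidder xs rho.

Let xs_feasible : feasible c a bidder xs. Proof. exact: xs_efficient.1. Qed.

Definition core_surplus (i : 'I_I) : R := win_amount b bidder xs i - rho i.

Definition core_cut_weight (k : 'I_K) : R := b k - core_surplus (bidder k).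

Definition core_cut : ('I_K -> R) * R :=
  (fun k => Num.max 0 (core_cut_weight k), \sum_i rho i).

Lemma sum_winning_bids_of_bidder (F : 'I_K -> R) :
  {in xs, forall k, F k = rho (bidder k)} ->
  forall i, \sum_(k in xs | bidder k == i) F k = rho i.
Proof.
move=> Frho i; case: (winnerP bidder xs i) => [[k kxs <-] | loser].
  by rewrite (sum_bids_of_bidder _ xs_feasible) // Frho.
by rewrite sum_bids_of_loser // rho_core.1.
Qed.

Lemma sum_winning_bids (F : 'I_K -> R) :
  {in xs, forall k, F k = rho (bidder k)} -> \sum_(k in xs) F k = \sum_i rho i.
Proof.
move=> Frho; rewrite (partition_big bidder predT) //=.
by apply: eq_bigr => i _; apply: sum_winning_bids_of_bidder.
Qed.

Lemma core_cut_weight_winner k : k \in xs -> core_cut_weight k = rho (bidder k).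
Proof.
move=> kxs; rewrite /core_cut_weight /core_surplus /win_amount.
by rewrite (sum_bids_of_bidder _ xs_feasible) // opprB addrC subrK.
Qed.

Lemma sum_core_cut_weight_le (y : {set 'I_K}) :
  feasible c a bidder y -> \sum_(k in y) core_cut_weight k <= \sum_i rho i.
Proof.
move=> fy; pose C := [set bidder k | k in y].
have welfare_le : welfare b y <= coal_value c a b bidder C.
  by apply: welfare_le_coal_value => // k ky; apply: imset_f.
have core_C := rho_core.2.2 C.
rewrite (big_imset _ (feasible_bidder_inj fy)) /= in core_C.
rewrite sumrB lerBlDr addrC; exact: le_trans welfare_le core_C.
Qed.

Lemma core_payment_ge0 i : 0 <= rho i.
Proof.
case: (winnerP bidder xs i) => [[k kxs <-] | loser]; last by rewrite rho_core.1.
(* the core bound for xs without k reads: sum rho - rho_i <= sum rho *)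
have := sum_core_cut_weight_le (feasible_subset xs_feasible (subsetDl xs [set k])).
rewrite -(sum_winning_bids core_cut_weight_winner) (big_setD1 k kxs) /=.
by rewrite core_cut_weight_winner // lerDr.
Qed.

Lemma core_cut_winner k : k \in xs -> core_cut.1 k = rho (bidder k).
Proof. by move=> kxs; rewrite /= core_cut_weight_winner // max_r ?core_payment_ge0. Qed.

Lemma core_cut_valid : valid_cut c a bidder xs core_cut.
Proof.
split; first by move=> k; rewrite le_max lexx.
split; last exact: sum_winning_bids core_cut_winner.
move=> y fy; pose y' := [set k in y | 0 <= core_cut_weight k].
have -> : \sum_(k in y) core_cut.1 k = \sum_(k in y') core_cut_weight k.
  rewrite big_mkcond [RHS]big_mkcond; apply: eq_bigr => k _.
  by rewrite inE /=; case: (k \in y) => //=; case: leP => // /ltW.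
apply: sum_core_cut_weight_le; apply: (feasible_subset fy).
by apply/subsetP => k; rewrite inE => /andP[].
Qed.

Let cuts := fun _ : 'I_1 => core_cut.
Let p := fun _ : 'I_J => 0 : R.
Let q := fun _ : 'I_1 => 1 : R.

Lemma bid_price_core_cut k : bid_price a cuts p q k = core_cut.1 k.
Proof. by rewrite /bid_price big1 ?add0r ?big_ord1 ?mul1r // => j _; rewrite mul0r. Qed.

Lemma payment_core_cut i : payment a bidder cuts xs p q i = rho i.
Proof.
apply: sum_winning_bids_of_bidder => k kxs.
by rewrite bid_price_core_cut core_cut_winner.
Qed.

Lemma surplus_core_cut i : surplus a b bidder cuts xs p q i = core_surplus i.
Proof. by rewrite /surplus payment_core_cut. Qed.

Lemma walrasian_core_cut : walrasian_eq c a b bidder cuts xs p q.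
Proof.
have [_ [cut_le cut_xs]] := core_cut_valid.
split.
  split; first by split => // l; apply: cut_le.
  by move=> y [fy _]; apply: xs_efficient.2.
split; first by [].
split; first by move=> l; apply: ler01.
split; first by move=> i; rewrite surplus_core_cut subr_ge0 rho_core.2.1.
split.
  move=> k; rewrite bid_price_core_cut surplus_core_cut /=.
  by rewrite -lerBlDr le_max lexx orbT.
by split=> // l; rewrite cut_xs ltxx.
Qed.

End CoreCut.

Theorem theorem1 (R : realFieldType) (J I K : nat)
  (c : 'I_J -> nat) (a : 'I_K -> 'I_J -> nat) (b : 'I_K -> R)
  (bidder : 'I_K -> 'I_I) :
  (forall j, (0 < c j)%N) ->
  (forall k j, (a k j <= c j)%N) ->
  (forall k, 0 <= b k) ->
  forall (xs : {set 'I_K}), efficient c a b bidder xs ->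
  forall (rho : 'I_I -> R), core_selecting c a b bidder xs rho ->
  exists (m : nat) (cuts : 'I_m -> ('I_K -> R) * R)
         (p : 'I_J -> R) (q : 'I_m -> R),
    (forall l, valid_cut c a bidder xs (cuts l)) /\
    walrasian_eq c a b bidder cuts xs p q /\
    (forall i, is_winner bidder xs i -> payment a bidder cuts xs p q i = rho i).
Proof.
move=> _ _ _ xs xs_eff rho rho_core.
exists 1%N, (fun=> core_cut b bidder xs rho), (fun=> 0), (fun=> 1).
split; first by move=> _; apply: (core_cut_valid xs_eff rho_core).
split; first exact: (walrasian_core_cut xs_eff rho_core).
by move=> i _; apply: (payment_core_cut xs_eff rho_core).
Qed.
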